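(* Let $m,n\ge 3$ and let $H$ be a $1$-clique sum of the cycles $C_m$ and $C_n$, i.e. the graph obtained from disjoint copies of $C_m$ and $C_n$ by identifying one vertex of $C_m$ with one vertex of $C_n$. Then $v(H)=v(C_n)+v(C_m)-1$.
   Context: For a proper graded ideal $I$ of a standard graded polynomial ring $S$ over a field, the $v$-number is $v(I)=\min\{k\ge 0 : \exists f\in S_k,\ \mathcal P\in\operatorname{Ass}(S/I) \text{ with } (I:f)=\mathcal P\}$. For a finite simple graph $G$, $I(G)$ is the edge ideal generated by $x_ix_j$ over edges $\{x_i,x_j\}$, and $v(G):=v(I(G))$. $C_k$ denotes the cycle on $k$ vertices. *)

From HB Require Import structures.
From mathcomp Require Import all_boot all_order all_algebra.
From mathcomp Require Import mpoly.
From Stdlib Require Import ClassicalDescription.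
Set Implicit Arguments. Unset Strict Implicit. Unset Printing Implicit Defensive.
Import GRing.Theory.
Local Open Scope ring_scope.
Delimit Scope nat_scope with N.

Section VNumber.
Variables (K : fieldType) (N : nat).
Local Notation S := {mpoly K[N]}.

Definition polyset := S -> Prop.

Definition is_ideal (I : polyset) : Prop :=
  I 0 /\ (forall f g, I f -> I g -> I (f + g)) /\ (forall f g, I g -> I (f * g)).

Definition is_prime_ideal (P : polyset) : Prop :=
  is_ideal P /\ ~ P 1 /\ (forall f g, P (f * g) -> P f \/ P g).

Definition colon (I : polyset) (f : S) : polyset := fun g => I (g * f).

Definition same_set (A B : polyset) : Prop := forall g, A g <-> B g.

Definition Ass (I : polyset) (P : polyset) : Prop :=
  is_prime_ideal P /\ exists g : S, same_set (colon I g) P.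

(* S_k : homogeneous polynomials of degree k (standard grading), 0 included *)
Definition homogeneous (k : nat) (f : S) : Prop :=
  forall m, m \in msupp f -> mdeg m = k.

Definition has_vnum (I : polyset) (k : nat) : Prop :=
  exists (f : S) (P : polyset), homogeneous k f /\ Ass I P /\ same_set (colon I f) P.

Definition has_vnumb (I : polyset) : pred nat :=
  fun k => if excluded_middle_informative (has_vnum I k) then true else false.

(* v(I) = least k with has_vnum I k (0 by convention if none exists;
   for proper graded ideals such a k always exists) *)
Definition vnumber (I : polyset) : nat :=
  match excluded_middle_informative (exists k, has_vnumb I k) with
  | left H => ex_minn H
  | right _ => 0%N
  end.

Definition edge_ideal (e : rel 'I_N) : polyset :=
  fun p => exists c : 'I_N -> 'I_N -> S,
    p = \sum_(i < N) \sum_(j < N | e i j) c i j * ('X_i * 'X_j).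

End VNumber.

Definition cycle_rel (n : nat) : rel 'I_n :=
  fun i j => ((val j == (val i).+1 %% n) || (val i == (val j).+1 %% n))%N.
Arguments cycle_rel n : clear implicits.
Arguments edge_ideal K {N} e _.

(* For a loopless graph G, v(I(G)) is the least size of an independent set A
   whose neighbourhood N(A) is a vertex cover (Jaramillo-Villarreal): for such
   an A the colon ideal (I(G) : x^A) is the prime ideal generated by the
   variables of N(A); conversely, if (I(G) : f) is prime with f homogeneous,
   the support of any monomial of f outside I(G) is such a set.

   Let H be the 1-clique sum of G1 and G2 glued at v. Witnesses A1 of G1 and A2
   of G2 that both contain v have a union which is a witness of H of size
   |A1| + |A2| - 1, and since cycles are vertex-transitive, optimal witnesses
   through v exist. Conversely, a witness A of H restricts to a witness of each
   G_k, provided v is added on the side of G_k when A contains a neighbour of v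
   in the other graph but none in G_k; the two restrictions have total size at
   most |A| + 1. *)

From HB Require Import structures.
From mathcomp Require Import all_boot all_order all_algebra.
From mathcomp Require Import mpoly.
From mathcomp Require Import zify.
From Stdlib Require Import ClassicalDescription.
Set Implicit Arguments. Unset Strict Implicit. Unset Printing Implicit Defensive.
Import GRing.Theory.

Section VWitness.
Variables (V : finType) (e : rel V).
Implicit Types (A B C : {set V}).

Definition adj x y := e x y || e y x.

Lemma adjC x y : adj x y = adj y x.
Proof. exact: orbC. Qed.

Definition nbh A := [set y | [exists x in A, adj x y]].
Definition independent A := [forall x in A, forall y in A, ~~ e x y].
Definition vertex_cover C := [forall x, forall y, e x y ==> (x \in C) || (y \in C)].
Definition vwitness A := independent A && vertex_cover (nbh A).

(* [vnum] is 0 when there is no witness, which only happens when [e] has a loop. *)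
Definition vnum : nat :=
  if [pick A | vwitness A] is Some A0 then #|[arg min_(A < A0 | vwitness A) #|A|]| else 0.

Lemma nbhP A y : reflect (exists2 x, x \in A & adj x y) (y \in nbh A).
Proof. by rewrite inE; apply: exists_inP. Qed.

Lemma independentP A : reflect {in A &, forall x y, ~~ e x y} (independent A).
Proof.
apply: (iffP forall_inP) => [h x y xA yA | h x xA]; first exact: (forall_inP (h x xA)).
by apply/forall_inP => y yA; apply: h.
Qed.

Lemma vertex_coverP C : reflect (forall x y, e x y -> x \in C \/ y \in C) (vertex_cover C).
Proof.
apply: (iffP forallP) => [h x y exy | h x].
  by move/forallP/(_ y): (h x); rewrite exy => /orP.
by apply/forallP => y; apply/implyP => /h /orP.
Qed.

Lemma independentU A B : independent A ->
  independent (A :|: B) = independent B && [disjoint nbh A & B].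
Proof.
move=> /independentP iA; apply/independentP/andP => [iAB | [/independentP iB dAB]].
  split; first by apply/independentP => x y xB yB; apply: iAB; rewrite inE ?xB ?yB orbT.
  apply/pred0P => y /=; apply/negbTE/andP => -[/nbhP [x xA /orP [] exy] yB].
    by have := iAB x y; rewrite !inE xA yB orbT exy => /(_ isT isT).
  by have := iAB y x; rewrite !inE xA yB orbT exy => /(_ isT isT).
have nAB x y : x \in A -> y \in B -> ~~ adj x y.
  move=> xA yB; apply: contraFN (disjointFl dAB yB) => axy.
  by apply/nbhP; exists x.
move=> x y; rewrite !inE => /orP [xA | xB] /orP [yA | yB]; first exact: iA.
- by apply: contraNN (nAB x y xA yB) => exy; rewrite /adj exy.
- by apply: contraNN (nAB y x yA xB) => exy; rewrite /adj exy orbT.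
- exact: iB.
Qed.

Lemma independent1 x : independent [set x] = ~~ e x x.
Proof.
apply/independentP/idP => [/(_ x x) | nexx u v]; first by rewrite inE eqxx => /(_ isT isT).
by rewrite !inE => /eqP -> /eqP ->.
Qed.

Lemma vertex_cover_meets C B : vertex_cover C -> ~~ independent B -> ~~ [disjoint C & B].
Proof.
move=> /vertex_coverP cC /independentP nB; apply/negP => dCB; apply: nB => x y xB yB.
by apply/negP => /cC []; rewrite ?(disjointFl dCB xB) ?(disjointFl dCB yB).
Qed.

Lemma vnum_spec A : vwitness A -> vnum <= #|A| /\ exists2 B, vwitness B & #|B| = vnum.
Proof.
rewrite /vnum; case: pickP => [A0 wA0 wA | /(_ A) -> //].
case: arg_minnP => // B wB minB; split; first exact: minB.
by exists B.
Qed.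

Lemma vnum_le A : vwitness A -> vnum <= #|A|.
Proof. by case/vnum_spec. Qed.

Lemma vnum_attained A : vwitness A -> exists2 B, vwitness B & #|B| = vnum.
Proof. by case/vnum_spec. Qed.

Lemma vwitness_exists : irreflexive e -> exists A, vwitness A.
Proof.
move=> irr; have indep0 : independent set0 by apply/independentP => x; rewrite inE.
case: (arg_maxnP (fun A => #|A|) indep0) => A iA maxA.
have nbh_max x : x \notin A -> x \in nbh A.
  move=> xA; apply: contraT => xN.
  suff /maxA : independent (x |: A) by rewrite cardsU1 xA /= ltnn.
  by rewrite setUC independentU // independent1 irr disjoint_sym disjoints1 xN.
exists A; rewrite /vwitness iA; apply/vertex_coverP => x y exy.
have [xA | /nbh_max] := boolP (x \in A); last by left.
have [yA | /nbh_max] := boolP (y \in A); last by right.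
by have /independentP /(_ x y xA yA) := iA; rewrite exy.
Qed.

Lemma vwitness_image (f : V -> V) A :
  injective f -> {mono f : x y / e x y} -> vwitness A -> vwitness (f @: A).
Proof.
move=> f_inj f_mono /andP [/independentP iA /vertex_coverP cA]; apply/andP; split.
  by apply/independentP => _ _ /imsetP [x xA ->] /imsetP [y yA ->]; rewrite f_mono; apply: iA.
have [g fK gK] := injF_bij f_inj.
apply/vertex_coverP => x y; rewrite -(gK x) -(gK y) f_mono.
by case/cA => /nbhP [z zA azx]; [left | right];
  apply/nbhP; exists (f z); rewrite ?imset_f // /adj !f_mono.
Qed.

Lemma vwitness_neq0 A x y : e x y -> vwitness A -> A != set0.
Proof.
move=> exy /andP [_ /vertex_coverP /(_ x y exy) cA]; apply/set0Pn.
by case: cA => /nbhP [z zA _]; exists z.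
Qed.

End VWitness.

Section MonomialSupport.
Variable N : nat.
Implicit Types (m : 'X_{1..N}) (A : {set 'I_N}).

Definition mnm_supp m : {set 'I_N} := [set i | m i != 0%N].

Lemma mnm_suppD m1 m2 : mnm_supp (m1 + m2)%MM = mnm_supp m1 :|: mnm_supp m2.
Proof. by apply/setP => i; rewrite !inE mnmDE addn_eq0 negb_and. Qed.

Lemma mnm_supp1 i : mnm_supp U_(i)%MM = [set i].
Proof. by apply/setP => j; rewrite !inE mnm1E (eq_sym j); case: (i == j). Qed.

Lemma card_mnm_supp m : #|mnm_supp m| <= mdeg m.
Proof.
rewrite mdegE -sum1_card [X in X <= _]big_mkcond /=.
by apply: leq_sum => i _; rewrite inE; case: (m i).
Qed.

Lemma lem_mnm_supp2 m i j : i != j -> i \in mnm_supp m -> j \in mnm_supp m ->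
  (U_(i) + U_(j) <= m)%MM.
Proof.
rewrite !inE -!lt0n => nij mi mj; apply/mnm_lepP => k; rewrite mnmDE !mnm1E.
have [<- | _] := eqVneq i k; have [ji | _] := eqVneq j _; rewrite ?ji ?eqxx in nij mj * => //=.
Qed.

Definition mnm_of_set A : 'X_{1..N} := [multinom (i \in A : nat) | i < N].

Lemma mnm_supp_of_set A : mnm_supp (mnm_of_set A) = A.
Proof. by apply/setP => i; rewrite inE mnmE; case: (i \in A). Qed.

Lemma mdeg_mnm_of_set A : mdeg (mnm_of_set A) = #|A|.
Proof.
rewrite mdegE -sum1_card [RHS]big_mkcond /=.
by apply: eq_bigr => i _; rewrite mnmE; case: (i \in A).
Qed.

End MonomialSupport.

Section MonomialIdeals.
Variables (K : fieldType) (N : nat).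
Local Notation S := {mpoly K[N]}.
Implicit Types (C : {set 'I_N}) (p : S).
Local Open Scope ring_scope.

Lemma msuppMX_forall (P : pred 'X_{1..N}) p u :
  {in msupp (p * 'X_[u]), forall m, P m} <-> {in msupp p, forall m, P (u + m)%MM}.
Proof.
have mem_msupp := perm_mem (msuppMX p u).
split => h m; first by move=> mp; apply: h; rewrite mem_msupp map_f.
by rewrite mem_msupp => /mapP [m' m'p ->]; apply: h.
Qed.

Definition var_ideal C : polyset K N :=
  fun p => {in msupp p, forall m, ~~ [disjoint C & mnm_supp m]}.

(* The kernel of this substitution, a ring morphism into a domain, is [var_ideal C]. *)
Definition kill_vars C : N.-tuple S := [tuple if i \in C then 0 else 'X_i | i < N].

Lemma comp_kill_varsX C m :
  'X_[m] \mPo kill_vars C = if [disjoint C & mnm_supp m] then 'X_[m] else 0.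
Proof.
rewrite comp_mpolyX; case: ifPn => [dCm | /pred0Pn [i /andP [/= iC]]].
  rewrite [RHS]mpolyXE_id; apply: eq_bigr => i _; rewrite tnth_mktuple.
  case: ifP => // iC; have := disjointFr dCm iC.
  by rewrite inE => /negbFE /eqP ->; rewrite !expr0.
by rewrite inE => mi; rewrite (bigD1 i) //= tnth_mktuple iC expr0n (negbTE mi) mul0r.
Qed.

Lemma comp_kill_varsE C p :
  p \mPo kill_vars C = \sum_(m <- msupp p | [disjoint C & mnm_supp m]) p@_m *: 'X_[m].
Proof.
rewrite comp_mpolyEX [RHS]big_mkcond /=; apply: eq_bigr => m _.
by rewrite comp_kill_varsX; case: ifP; rewrite ?scaler0.
Qed.

Lemma var_idealE C p : var_ideal C p <-> p \mPo kill_vars C = 0.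
Proof.
rewrite comp_kill_varsE; split => [vp | p0 m mp].
  by rewrite big_seq_cond big1 // => m /andP [/vp /negbTE ->].
apply/negP => dCm.
have : m \in msupp (\sum_(m <- msupp p | [disjoint C & mnm_supp m]) p@_m *: 'X_[m]).
  rewrite -big_filter (perm_mem (msupp_sumX _ _)) ?mem_filter ?dCm ?filter_uniq //.
  by move=> m'; rewrite mem_filter mcoeff_msupp => /andP [].
by rewrite p0 msupp0.
Qed.

Lemma comp_mpolyM (lq : N.-tuple S) : {morph comp_mpoly lq : f g / f * g}.
Proof. exact: rmorphM. Qed.

Lemma var_ideal_prime C : is_prime_ideal (var_ideal C).
Proof.
split; [split; [|split] | split].
- by apply/var_idealE; rewrite comp_mpoly0.
- by move=> f g /var_idealE f0 /var_idealE g0; apply/var_idealE; rewrite comp_mpolyD f0 g0 addr0.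
- by move=> f g /var_idealE g0; apply/var_idealE; rewrite comp_mpolyM g0 mulr0.
- by move/var_idealE; rewrite comp_mpoly1; apply/eqP/oner_neq0.
- move=> f g /var_idealE /eqP; rewrite comp_mpolyM mulf_eq0.
  by case/orP => /eqP fg0; [left | right]; apply/var_idealE.
Qed.

End MonomialIdeals.

Section EdgeIdeal.
Variables (K : fieldType) (N : nat) (e : rel 'I_N).
Hypothesis e_irr : irreflexive e.
Local Notation S := {mpoly K[N]}.
Local Notation I := (edge_ideal K e).
Local Open Scope ring_scope.

Lemma edge_ideal0 : I 0.
Proof.
by exists (fun _ _ => 0); rewrite big1 // => i _; rewrite big1 // => j _; rewrite mul0r.
Qed.

Lemma edge_idealD p q : I p -> I q -> I (p + q).
Proof.
case=> c1 -> [c2 ->]; exists (fun i j => c1 i j + c2 i j).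
rewrite -big_split; apply: eq_bigr => i _.
by rewrite -big_split; apply: eq_bigr => j _; rewrite mulrDl.
Qed.

Lemma edge_ideal_sum (T : Type) (r : seq T) (P : pred T) (F : T -> S) :
  (forall x, P x -> I (F x)) -> I (\sum_(x <- r | P x) F x).
Proof. by move=> IF; apply: big_ind => //; [apply: edge_ideal0 | apply: edge_idealD]. Qed.

Lemma edge_ideal_gen q i j : e i j -> I (q * ('X_i * 'X_j)).
Proof.
move=> eij; exists (fun i' j' => if (i' == i) && (j' == j) then q else 0).
rewrite (bigD1 i) //= (bigD1 j) //= !eqxx /=.
rewrite big1 ?addr0 => [|j' /andP [_ /negbTE ->]]; last by rewrite mul0r.
rewrite big1 ?addr0 // => i' /negbTE ne; rewrite big1 // => j' _.
by rewrite ne mul0r.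
Qed.

Lemma edge_idealP p : I p <-> {in msupp p, forall m, ~~ independent e (mnm_supp m)}.
Proof.
split=> [[c ->] | dep_p].
  pose Q (q : S) := {in msupp q, forall m, ~~ independent e (mnm_supp m)}.
  have QD q1 q2 : Q q1 -> Q q2 -> Q (q1 + q2).
    by move=> h1 h2 m /msuppD_le; rewrite mem_cat => /orP [/h1 | /h2].
  apply: (big_ind Q) => // [m|i _]; first by rewrite msupp0.
  apply: (big_ind Q) => // [m|j eij]; first by rewrite msupp0.
  rewrite -mpolyXD; apply/msuppMX_forall => m _.
  rewrite !mnm_suppD !mnm_supp1; apply/independentP => /(_ i j).
  by rewrite !inE !eqxx orbT eij => /(_ isT isT).
rewrite [p]mpolyE big_seq; apply: edge_ideal_sum => m /dep_p.
case/forall_inPn => i im /forall_inPn [j jm /negPn eij].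
have nij : i != j by apply: contraTneq eij => ->; rewrite e_irr.
have -> : 'X_[m] = 'X_[m - (U_(i) + U_(j))] * ('X_i * 'X_j) :> S.
  by rewrite -!mpolyXD submK // lem_mnm_supp2.
by rewrite scalerAl; apply: edge_ideal_gen.
Qed.

Lemma colon_edge_ideal_vwitness A : vwitness e A ->
  same_set (colon I 'X_[mnm_of_set A]) (var_ideal (nbh e A)).
Proof.
case/andP => iA cA g; rewrite /colon edge_idealP msuppMX_forall.
split=> h m /h; rewrite mnm_suppD mnm_supp_of_set independentU // negb_and.
  by case/orP => // /(vertex_cover_meets cA).
by move=> ->; rewrite orbT.
Qed.

Lemma has_vnum_vwitness A : vwitness e A -> has_vnum I #|A|.
Proof.
move=> wA; exists 'X_[mnm_of_set A], (var_ideal (nbh e A)).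
have colA := colon_edge_ideal_vwitness wA.
split; first by move=> m /mem_msuppXP <-; rewrite mdeg_mnm_of_set.
by split=> //; split; [apply: var_ideal_prime | exists 'X_[mnm_of_set A]].
Qed.

Lemma vwitness_colon_prime (f : S) k P : homogeneous k f -> is_prime_ideal P ->
  same_set (colon I f) P -> exists2 A, vwitness e A & (#|A| <= k)%N.
Proof.
move=> hf [_ [P1 Pmul]] fP.
have [m mf im] : exists2 m, m \in msupp f & independent e (mnm_supp m).
  have [dep_f | ] := boolP (all (fun m => ~~ independent e (mnm_supp m)) (msupp f)).
    by case: P1; apply/fP; rewrite /colon mul1r; apply/edge_idealP/allP.
  by rewrite -has_predC => /hasP [m mf /negPn im]; exists m.
have nbh_var i : P 'X_i -> i \in nbh e (mnm_supp m).
  move/fP; rewrite /colon mulrC edge_idealP msuppMX_forall => /(_ m mf).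
  rewrite mnm_suppD mnm_supp1 setUC independentU // independent1 e_irr.
  by rewrite disjoint_sym disjoints1 negbK.
exists (mnm_supp m); last by rewrite -(hf m mf) card_mnm_supp.
rewrite /vwitness im; apply/vertex_coverP => x y exy.
have : P ('X_x * 'X_y) by apply/fP; rewrite /colon mulrC; apply: edge_ideal_gen.
by case/Pmul => /nbh_var; [left | right].
Qed.

Theorem vnumber_edge_ideal : vnumber I = vnum e.
Proof.
have has_vnumbE k : has_vnumb I k <-> has_vnum I k.
  by rewrite /has_vnumb; case: excluded_middle_informative.
have [A0 wA0] := vwitness_exists e_irr.
rewrite /vnumber; case: excluded_middle_informative => [ex | []]; last first.
  by exists #|A0|; apply/has_vnumbE/has_vnum_vwitness.
case: ex_minnP => k /has_vnumbE [f [P [hf [[Pp _] fP]]]] kmin.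
apply/eqP; rewrite eqn_leq; apply/andP; split.
  by have [A wA <-] := vnum_attained wA0; apply/kmin/has_vnumbE/has_vnum_vwitness.
by have [A wA leAk] := vwitness_colon_prime hf Pp fP; apply: leq_trans (vnum_le wA) leAk.
Qed.

End EdgeIdeal.

Section Restrict.
Variables (V W : finType) (a : V -> W) (i0 : V).

Definition touches (e1 : rel V) (A : {set W}) := [exists k, (a k \in A) && adj e1 k i0].

Definition restrict (A : {set W}) (t : bool) : {set V} := [set i | (a i \in A) || t && (i == i0)].

Lemma card_restrict A t : #|restrict A t| <= #|[set i | a i \in A]| + t.
Proof.
have -> : restrict A t = [set i | a i \in A] :|: (if t then [set i0] else set0).
  by apply/setP => i; case: t; rewrite !inE ?orbF.
by apply: leq_trans (leq_card_setU _ _) _; rewrite leq_add2l; case: t; rewrite ?cards1 ?cards0.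
Qed.

End Restrict.

Record clique_sum1 (V1 V2 W : finType) (e1 : rel V1) (e2 : rel V2) (e : rel W)
    (a : V1 -> W) (b : V2 -> W) (i0 : V1) (j0 : V2) : Prop := CliqueSum1 {
  clique_sum1_injl : injective a;
  clique_sum1_injr : injective b;
  clique_sum1_glue : forall i j, a i = b j <-> (i = i0 /\ j = j0);
  clique_sum1_cover : forall x, (exists i, x = a i) \/ (exists j, x = b j);
  clique_sum1_edge : forall x y, e x y <->
    ((exists i j, x = a i /\ y = a j /\ e1 i j) \/
     (exists i j, x = b i /\ y = b j /\ e2 i j)) }.

Lemma clique_sum1_sym (V1 V2 W : finType) (e1 : rel V1) (e2 : rel V2) (e : rel W)
    (a : V1 -> W) (b : V2 -> W) (i0 : V1) (j0 : V2) :
  clique_sum1 e1 e2 e a b i0 j0 -> clique_sum1 e2 e1 e b a j0 i0.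
Proof.
case=> a_inj b_inj glue cover edge; split => // [j i | x | x y].
- by split => [/esym /glue [-> ->] | [-> ->]] //; apply/esym/glue.
- by case: (cover x); [right | left].
- by split => [/edge [] | []] h; [right | left | apply/edge; right | apply/edge; left].
Qed.

Section CliqueSum.
Variables (V1 V2 W : finType) (e1 : rel V1) (e2 : rel V2) (e : rel W).
Variables (a : V1 -> W) (b : V2 -> W) (i0 : V1) (j0 : V2).
Hypothesis hS : clique_sum1 e1 e2 e a b i0 j0.
Hypotheses (irr1 : irreflexive e1) (irr2 : irreflexive e2).
Implicit Type A : {set W}.

Let a_inj := clique_sum1_injl hS.
Let b_inj := clique_sum1_injr hS.
Let edge := clique_sum1_edge hS.

Let glue_ab i j : a i = b j -> i = i0 /\ j = j0.
Proof. exact: (clique_sum1_glue hS i j).1. Qed.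

Let glue_ba j i : b j = a i -> i = i0 /\ j = j0.
Proof. by move/esym/glue_ab. Qed.

Let b_j0 : b j0 = a i0.
Proof. exact/esym/(clique_sum1_glue hS i0 j0).2. Qed.

Lemma clique_sum_edge_l i j : e (a i) (a j) = e1 i j.
Proof.
apply/idP/idP => [/edge [[i' [j' [/a_inj <- [/a_inj <- //]]]] | ] | eij].
  by case=> i' [j' [/glue_ab [-> ->] [/glue_ab [-> ->]]]]; rewrite irr2.
by apply/edge; left; exists i, j.
Qed.

Lemma clique_sum_edge_r i j : e (b i) (b j) = e2 i j.
Proof.
apply/idP/idP => [/edge [ | [i' [j' [/b_inj <- [/b_inj <- //]]]]] | eij].
  by case=> i' [j' [/glue_ba [-> ->] [/glue_ba [-> ->]]]]; rewrite irr1.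
by apply/edge; right; exists i, j.
Qed.

Lemma clique_sum_irr : irreflexive e.
Proof.
move=> x; case: (clique_sum1_cover hS x) => -[y ->];
  by rewrite ?clique_sum_edge_l ?clique_sum_edge_r.
Qed.

Lemma clique_sum_adj_lr i j : adj e (a i) (b j) ->
  (i = i0 /\ adj e2 j0 j) \/ (j = j0 /\ adj e1 i i0).
Proof.
case/orP => /edge [] [i' [j' [xi [yj eij]]]]; move: xi yj eij.
- by move=> /a_inj <- /glue_ba [-> ->] ei; right; rewrite /adj ei.
- by move=> /glue_ab [-> ->] /b_inj <- ej; left; rewrite /adj ej.
- by move=> /glue_ba [-> ->] /a_inj <- ei; right; rewrite /adj ei orbT.
- by move=> /b_inj <- /glue_ab [-> ->] ej; left; rewrite /adj ej orbT.
Qed.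

Lemma clique_sum_adj_l w z : adj e z (a w) ->
  (exists2 k, z = a k & adj e1 k w) \/ (w = i0 /\ exists2 l, z = b l & adj e2 l j0).
Proof.
case: (clique_sum1_cover hS z) => -[y ->].
  by rewrite /adj !clique_sum_edge_l => ?; left; exists y.
rewrite adjC => /clique_sum_adj_lr [[-> y_j0] | [-> w_i0]].
  by right; split => //; exists y; rewrite // adjC.
by left; exists i0; rewrite ?b_j0 // adjC.
Qed.

Lemma vwitness_glue (A1 : {set V1}) (A2 : {set V2}) :
  vwitness e1 A1 -> vwitness e2 A2 -> i0 \in A1 -> j0 \in A2 ->
  vwitness e (a @: A1 :|: b @: A2).
Proof.
move=> /andP [/independentP iA1 /vertex_coverP cA1] /andP [/independentP iA2 /vertex_coverP cA2].
move=> i0A1 j0A2; set U := _ :|: _.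
have memUl i : (a i \in U) = (i \in A1).
  rewrite in_setU (mem_imset _ _ a_inj).
  by apply/orP/idP => [[// | /imsetP [j _ /glue_ab [-> _]]] | ->]; last by left.
have memUr j : (b j \in U) = (j \in A2).
  rewrite in_setU (mem_imset _ _ b_inj).
  by apply/orP/idP => [[/imsetP [i _ /glue_ba [_ ->]] | //] | ->]; last by right.
apply/andP; split.
  apply/independentP => x y xU yU; apply/negP => /edge [] [i [j [xi [yj eij]]]];
    move: xU yU eij; rewrite xi yj.
  - by rewrite !memUl => /iA1 /[apply] /negbTE ->.
  - by rewrite !memUr => /iA2 /[apply] /negbTE ->.
apply/vertex_coverP => x y /edge [] [i [j [-> [-> eij]]]].
- by case: (cA1 i j eij) => /nbhP [k kA1 k_adj]; [left | right];
    apply/nbhP; exists (a k); rewrite ?memUl // /adj !clique_sum_edge_l.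
- by case: (cA2 i j eij) => /nbhP [k kA2 k_adj]; [left | right];
    apply/nbhP; exists (b k); rewrite ?memUr // /adj !clique_sum_edge_r.
Qed.

Lemma card_glue (A1 : {set V1}) (A2 : {set V2}) : i0 \in A1 -> j0 \in A2 ->
  #|a @: A1 :|: b @: A2| = (#|A1| + #|A2|).-1.
Proof.
move=> i0A1 j0A2; have glueI : a @: A1 :&: b @: A2 = [set a i0].
  apply/setP => x; rewrite !inE; apply/andP/eqP => [[/imsetP [i _ ->]] | ->].
    by case/imsetP => j _ /glue_ab [->].
  by rewrite -{2}b_j0 !imset_f.
by have := cardsUI (a @: A1) (b @: A2); rewrite glueI cards1 !card_imset // addn1 => <-.
Qed.

Lemma vnum_clique_sum_le (A1 : {set V1}) (A2 : {set V2}) :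
  vwitness e1 A1 -> vwitness e2 A2 -> i0 \in A1 -> j0 \in A2 -> vnum e <= (#|A1| + #|A2|).-1.
Proof. by move=> wA1 wA2 i0A1 j0A2; rewrite -card_glue //; apply/vnum_le/vwitness_glue. Qed.

Lemma card_preimages A :
  #|[set i | a i \in A]| + #|[set j | b j \in A]| <= #|A| + (a i0 \in A).
Proof.
rewrite -(card_imset _ a_inj) -(card_imset _ b_inj) -cardsUI leq_add //.
  by apply/subset_leq_card/subsetP => x; rewrite inE => /orP [] /imsetP [y]; rewrite inE => ? ->.
have glueI : a @: [set i | a i \in A] :&: b @: [set j | b j \in A] \subset A :&: [set a i0].
  apply/subsetP => x; rewrite !inE => /andP [/imsetP [i]].
  by rewrite inE => aiA -> /imsetP [j _ /glue_ab [<- _]]; rewrite aiA eqxx.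
apply: leq_trans (subset_leq_card glueI) _.
have [ai0A | ai0NA] := boolP (a i0 \in A).
  by rewrite (leq_trans (subset_leq_card (subsetIr _ _))) ?cards1.
rewrite leqn0 cards_eq0; apply/eqP/setP => x; rewrite !inE.
by apply/negbTE/negP => /andP [xA /eqP xi0]; rewrite -xi0 xA in ai0NA.
Qed.

Lemma touches_glue A : independent e A -> a i0 \in A -> touches a i0 e1 A = false.
Proof.
move=> /independentP iA ai0A; apply/negbTE/negP => /existsP [k /andP [akA]].
by rewrite /adj -!clique_sum_edge_l => /orP [] ek;
  [move: (iA _ _ akA ai0A) | move: (iA _ _ ai0A akA)]; rewrite ek.
Qed.

Lemma vwitness_restrict A : vwitness e A ->
  vwitness e1 (restrict a i0 A (touches b j0 e2 A && ~~ touches a i0 e1 A)).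
Proof.
case/andP => /independentP iA /vertex_coverP cA.
set t := _ && _; set B := restrict _ _ _ _.
have touchesP k : a k \in A -> adj e1 k i0 -> touches a i0 e1 A.
  by move=> akA k_i0; apply/existsP; exists k; rewrite akA.
have t_i0 : t -> ~~ touches a i0 e1 A by case/andP.
apply/andP; split.
  apply/independentP => x y; rewrite !inE.
  case/orP => [ax | /andP [/t_i0 nt /eqP ->]]; case/orP => [ay | /andP [/t_i0 nt' /eqP ->]].
  - by rewrite -clique_sum_edge_l; apply: iA.
  - by apply: contra nt' => ex; apply: (touchesP x ax); rewrite /adj ex.
  - by apply: contra nt => ey; apply: (touchesP y ay); rewrite /adj ey orbT.
  - by rewrite irr1.
have nbhB w w' : adj e1 w w' -> a w \in nbh e A -> w \in nbh e1 B \/ w' \in nbh e1 B.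
  move=> ww' /nbhP [z zA az]; case: (clique_sum_adj_l az) => [[k zk kw] | [wi0 [l zl l_j0]]].
    by left; apply/nbhP; exists k; rewrite // inE -zk zA.
  subst w; have tb : touches b j0 e2 A by apply/existsP; exists l; rewrite -zl zA.
  have [/existsP [k /andP [akA k_i0]] | ta] := boolP (touches a i0 e1 A).
    by left; apply/nbhP; exists k; rewrite // inE akA.
  by right; apply/nbhP; exists i0 => //; rewrite inE /t tb ta eqxx orbT.
apply/vertex_coverP => u v euv.
have [uv vu] : adj e1 u v /\ adj e1 v u by rewrite /adj euv orbT.
case: (cA (a u) (a v)); first by rewrite clique_sum_edge_l.
  exact: nbhB uv.
by case/(nbhB _ _ vu); [right | left].
Qed.

End CliqueSum.

Lemma vnum_clique_sum_ge (V1 V2 W : finType) (e1 : rel V1) (e2 : rel V2) (e : rel W)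
    (a : V1 -> W) (b : V2 -> W) (i0 : V1) (j0 : V2) :
  clique_sum1 e1 e2 e a b i0 j0 -> irreflexive e1 -> irreflexive e2 ->
  vnum e1 + vnum e2 <= vnum e + 1.
Proof.
move=> hS irr1 irr2; have hS' := clique_sum1_sym hS.
have [A0 wA0] := vwitness_exists (clique_sum_irr hS irr1 irr2).
have [A wA <-] := vnum_attained wA0.
set ta := touches a i0 e1 A; set tb := touches b j0 e2 A.
have le1 := vnum_le (vwitness_restrict hS irr1 irr2 wA).
have le2 := vnum_le (vwitness_restrict hS' irr2 irr1 wA).
have c1 := card_restrict a i0 A (tb && ~~ ta).
have c2 := card_restrict b j0 A (ta && ~~ tb).
have cAB := card_preimages hS A.
have flags : (tb && ~~ ta) + (ta && ~~ tb) + (a i0 \in A) <= 1.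
  have [ai0A | _] := boolP (a i0 \in A); last by case: (ta); case: (tb).
  have bj0A : b j0 \in A by rewrite -(clique_sum1_glue hS i0 j0).2.
  have iA : independent e A by case/andP: wA.
  by rewrite /ta /tb (touches_glue hS irr2 iA ai0A) (touches_glue hS' irr1 iA bj0A).
lia.
Qed.

Section Cycle.
Variable n : nat.

Lemma cycle_relE (i j : 'I_n) : cycle_rel n i j = (j == ordS i) || (i == ordS j).
Proof. by []. Qed.

Lemma cycle_rel_irr : 1 < n -> irreflexive (cycle_rel n).
Proof.
move=> n_gt1 i; rewrite /cycle_rel orbb /=; apply/negbTE.
have [lt_i1n | le_ni1] := ltnP i.+1 n; first by rewrite modn_small //; lia.
have -> : i.+1 = n by apply/eqP; rewrite eqn_leq le_ni1 ltn_ord.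
by rewrite modnn; lia.
Qed.

Lemma val_iter_ordS k (i : 'I_n) : val (iter k (@ordS n) i) = (i + k) %% n.
Proof.
elim: k => [|k IH] /=; first by rewrite addn0 modn_small.
by rewrite IH -addn1 modnDml addn1 addnS.
Qed.

Lemma iter_ordS_inj k : injective (iter k (@ordS n)).
Proof. by elim: k => // k IH x y /= /ordS_inj /IH. Qed.

Lemma cycle_rel_iter_ordS k : {mono iter k (@ordS n) : i j / cycle_rel n i j}.
Proof.
elim: k => // k IH i j /=.
by rewrite cycle_relE !(inj_eq (@ordS_inj n)) -cycle_relE IH.
Qed.

Lemma cycle_vwitness_through (i0 : 'I_n) : 1 < n ->
  exists A, [/\ vwitness (cycle_rel n) A, #|A| = vnum (cycle_rel n) & i0 \in A].
Proof.
move=> n_gt1; have [A0 wA0] := vwitness_exists (cycle_rel_irr n_gt1).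
have [A wA cardA] := vnum_attained wA0.
have e01 : cycle_rel n (Ordinal (ltnW n_gt1)) (Ordinal n_gt1) by rewrite /cycle_rel /= modn_small.
have /set0Pn [x xA] := vwitness_neq0 e01 wA.
pose f := iter (n - x + i0) (@ordS n).
have fx : f x = i0.
  apply: val_inj; rewrite val_iter_ordS addnA subnKC; last exact: ltnW.
  by rewrite modnDl modn_small.
exists (f @: A); split; last by rewrite -fx imset_f.
  by apply: vwitness_image wA; [apply: iter_ordS_inj | apply: cycle_rel_iter_ordS].
by rewrite card_imset //; apply: iter_ordS_inj.
Qed.

End Cycle.

Theorem proposition3p9 (K : fieldType) (m n N : nat) (hm : 3 <= m) (hn : 3 <= n)
    (e : rel 'I_N) (a : 'I_m -> 'I_N) (b : 'I_n -> 'I_N) (i0 : 'I_m) (j0 : 'I_n)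
    (a_inj : injective a) (b_inj : injective b)
    (hab : forall i j, a i = b j <-> (i = i0 /\ j = j0))
    (hcov : forall x, (exists i, x = a i) \/ (exists j, x = b j))
    (he : forall x y, e x y <->
       ((exists i j, x = a i /\ y = a j /\ cycle_rel m i j) \/
        (exists i j, x = b i /\ y = b j /\ cycle_rel n i j))) :
  vnumber (edge_ideal K e) =
   (vnumber (edge_ideal K (cycle_rel n)) + vnumber (edge_ideal K (cycle_rel m)) - 1)%N.
Proof.
have irr_m := cycle_rel_irr (ltnW hm); have irr_n := cycle_rel_irr (ltnW hn).
have hS : clique_sum1 (cycle_rel m) (cycle_rel n) e a b i0 j0 by split.
rewrite (vnumber_edge_ideal K (clique_sum_irr hS irr_m irr_n)) !vnumber_edge_ideal //.
have [A1 [wA1 cardA1 i0A1]] := cycle_vwitness_through i0 (ltnW hm).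
have [A2 [wA2 cardA2 j0A2]] := cycle_vwitness_through j0 (ltnW hn).
have le := vnum_clique_sum_le hS irr_m irr_n wA1 wA2 i0A1 j0A2.
have ge := vnum_clique_sum_ge hS irr_m irr_n.
have A1_gt0 : 0 < #|A1| by apply/card_gt0P; exists i0.
have A2_gt0 : 0 < #|A2| by apply/card_gt0P; exists j0.
lia.
Qed.
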